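(* Let $B,W,T$ be positive integers with $W\ge B+1$ and let $T_{\mathrm{eff}}=\min(W-1,T)$. For the channel $\mathcal{C}(N=1,B,W)$ there exists a streaming code with delay $T$ and rate \[ R=\begin{cases}\frac{T_{\mathrm{eff}}}{T_{\mathrm{eff}}+B}, & T_{\mathrm{eff}}\ge B,\\ 0, & \text{else}.\end{cases} \]
   Context: Channel $\mathcal{C}(N,B,W)$: a packet erasure channel on channel uses $i=0,1,2,\dots$ such that in every sliding window of $W$ consecutive channel uses the erased positions form either a single burst of length at most $B$ or at most $N$ arbitrary erasures (for $N=1$: at most one burst of length at most $B$ per window). Streaming code: at time $i$ the encoder observes $\mathbf{s}[i]\in\mathbb{F}_q^k$ and transmits $\mathbf{x}[i]=f_i(\mathbf{s}[0],\dots,\mathbf{s}[i])\in\mathbb{F}_q^n$; outputs are $\mathbf{y}[i]\in\{\mathbf{x}[i],\star\}$. Delay $T$ means $\mathbf{s}[i]=g_i(\mathbf{y}[0],\dots,\mathbf{y}[i+T])$ for all $i$, all sources and all admissible erasure patterns. Rate $R=k/n$. *)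

From HB Require Import structures.
From mathcomp Require Import all_boot all_order all_algebra.
Set Implicit Arguments. Unset Strict Implicit. Unset Printing Implicit Defensive.
Import Order.TTheory GRing.Theory Num.Theory.

(* Erasure pattern: e i = true iff channel use i is erased. *)
Definition erasure_pattern := nat -> bool.

Definition admissible_C1 (B W : nat) (e : erasure_pattern) : Prop :=
  forall t : nat, exists a l : nat,
    l <= B /\ forall i, t <= i < t + W -> e i = (a <= i < a + l).

Definition causal_encoder (F : Type) (k n : nat)
    (enc : nat -> (nat -> 'rV[F]_k) -> 'rV[F]_n) : Prop :=
  forall i (s s' : nat -> 'rV[F]_k),
    (forall j, j <= i -> s j = s' j) -> enc i s = enc i s'.

(* Decoder dec i outputs an estimate of s[i] and depends only on
   y[0..i+T]; None stands for an erasure (the symbol \star). *)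
Definition delay_decoder (F : Type) (k n T : nat)
    (dec : nat -> (nat -> option 'rV[F]_n) -> 'rV[F]_k) : Prop :=
  forall i (y y' : nat -> option 'rV[F]_n),
    (forall j, j <= i + T -> y j = y' j) -> dec i y = dec i y'.

Definition channel_output (F : Type) (k n : nat)
    (enc : nat -> (nat -> 'rV[F]_k) -> 'rV[F]_n) (s : nat -> 'rV[F]_k)
    (e : erasure_pattern) : nat -> option 'rV[F]_n :=
  fun j => if e j then None else Some (enc j s).

Definition streaming_code_exists_C1 (F : Type) (k n B W T : nat) : Prop :=
  exists (enc : nat -> (nat -> 'rV[F]_k) -> 'rV[F]_n)
         (dec : nat -> (nat -> option 'rV[F]_n) -> 'rV[F]_k),
    causal_encoder enc /\ delay_decoder T dec /\
    forall (s : nat -> 'rV[F]_k) (e : erasure_pattern),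
      admissible_C1 B W e ->
      forall i, dec i (channel_output enc s e) = s i.

Definition Teff (W T : nat) : nat := minn (W - 1) T.

Definition rate_C1 (B W T : nat) : rat :=
  if B <= Teff W T then ((Teff W T)%:R / (Teff W T + B)%:R)%R else 0%R.

(* Let K := T_eff - B and D := B + K = T_eff (the case T_eff < B is the trivial
   code of rate 0).  Split the source s[t] in F^D into u[t] in F^B and v[t] in
   F^K.  The K symbols v[c-D+l][l] on a diagonal c are encoded into D parity
   symbols by evaluating, at D distinct points, the polynomial with these
   coefficients in the Newton basis: parity j only depends on the first j+1
   message symbols, so it can be sent at time c-D+j, and any K parities
   determine the diagonal.  Packet t carries u[t], one parity of each of D
   diagonals, and u[t-D] added to the last B of them.  A burst of length at
   most B inside the window [i, i+D] erases at most B parities of a diagonal,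
   so v[i] is known by time i+D; if u[i] is erased, the burst ends before i+B,
   the parities received in [i+B, i+D) decode the diagonal whose parity masks
   u[i] in packet i+D.  The code is linear, so decoding reduces to showing
   that a source difference with zero packets off the burst vanishes. *)

From HB Require Import structures.
From mathcomp Require Import all_boot all_order all_algebra.
Import Order.TTheory GRing.Theory Num.Theory.
From mathcomp Require Import zify ring.
From Stdlib Require Import ClassicalEpsilon FunctionalExtensionality PropExtensionality.
Set Implicit Arguments. Unset Strict Implicit. Unset Printing Implicit Defensive.

Section NewtonCode.
Variables (F : fieldType) (al : nat -> F).
Local Open Scope ring_scope.

Definition newton_at (l j : nat) : F := \prod_(m < l) (al j - al m).

Definition newton_poly (K : nat) (a : nat -> F) : {poly F} :=
  \sum_(l < K) a l *: \prod_(m < l) ('X - (al m)%:P).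

Lemma newton_at_lt l j : (j < l)%N -> newton_at l j = 0.
Proof. by move=> jl; rewrite /newton_at (bigD1 (Ordinal jl)) //= subrr mul0r. Qed.

Lemma horner_newton_poly K a j :
  (newton_poly K a).[al j] = \sum_(l < K) a l * newton_at l j.
Proof.
rewrite horner_sum; apply: eq_bigr => l _; rewrite hornerZ horner_prod.
by congr (_ * _); apply: eq_bigr => m _; rewrite hornerXsubC.
Qed.

Lemma size_newton_poly K a : (size (newton_poly K a) <= K)%N.
Proof.
apply: leq_trans (size_sum _ _ _) _; apply/bigmax_leqP => l _.
apply: leq_trans (size_scale_leq _ _) _.
by rewrite size_prod_XsubC [index_enum _]unlock -enumT size_enum_ord.
Qed.

Variable D : nat.
Hypothesis al_inj :
  forall j j', (j < D)%N -> (j' < D)%N -> al j = al j' -> j = j'.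

Lemma newton_at_diag_neq0 l : (l < D)%N -> newton_at l l != 0.
Proof.
move=> lD; apply/prodf_neq0 => m _; rewrite subr_eq0; apply/eqP => /al_inj.
by move=> /(_ lD (ltn_trans (ltn_ord m) lD)); move: (ltn_ord m); lia.
Qed.

Lemma newton_code_mds K (a : nat -> F) (js : seq nat) :
  (K <= D)%N -> uniq js -> all (gtn D) js -> (K <= size js)%N ->
  (forall j, j \in js -> \sum_(l < K) a l * newton_at l j = 0) ->
  forall l, (l < K)%N -> a l = 0.
Proof.
move=> KD js_uniq js_lt js_size js0.
have p0 : newton_poly K a = 0.
  apply: (@roots_geq_poly_eq0 _ _ (map al js)).
  - by apply/allP => _ /mapP [j jjs ->]; rewrite /root horner_newton_poly js0.
  - rewrite map_inj_in_uniq // => j j' /(allP js_lt) jD /(allP js_lt) j'D.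
    exact: al_inj.
  - by rewrite size_map; apply: leq_trans (size_newton_poly K a) js_size.
have sum0 j : \sum_(l < K) a l * newton_at l j = 0.
  by rewrite -horner_newton_poly p0 horner0.
elim/ltn_ind => l IH lK; have := sum0 l.
rewrite (bigD1 (Ordinal lK)) //= big1 => [|m ml].
  rewrite addr0 => /eqP; rewrite mulf_eq0 (negbTE (newton_at_diag_neq0 _)) ?orbF.
    by move/eqP.
  exact: leq_trans lK KD.
have [lt_ml|le_lm] := ltnP m l; first by rewrite IH ?mul0r.
rewrite newton_at_lt ?mulr0 // ltn_neqAle le_lm andbT.
by move: ml; rewrite -val_eqE /= eq_sym.
Qed.

Lemma newton_code_gap K (a : nat -> F) (x y : nat) :
  (x <= K)%N -> (x <= y)%N -> (y + (K - x) <= D)%N ->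
  (forall j, ((j < x) || (y <= j < y + (K - x)))%N ->
     \sum_(l < K) a l * newton_at l j = 0) ->
  forall l, (l < K)%N -> a l = 0.
Proof.
move=> xK xy yD gap0.
apply: (@newton_code_mds K a (iota 0 x ++ iota y (K - x))).
- lia.
- rewrite cat_uniq !iota_uniq /= andbT; apply/hasPn => j; rewrite !mem_iota.
  by move=> jy; apply/negP; lia.
- by apply/allP => j; rewrite mem_cat !mem_iota /=; lia.
- by rewrite size_cat !size_iota; lia.
- by move=> j; rewrite mem_cat !mem_iota => jgap; apply: gap0; lia.
Qed.

End NewtonCode.

Section BurstCode.
Variables (F : fieldType) (al : nat -> F) (B K : nat).
Local Notation D := (B + K).

(* A source is viewed as an array [sg t j], [j < D]: [u t = sg t [0, B)] and
   [v t = sg t [B, D)].  [delayed sg tau] is the source of time [tau - D]. *)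
Definition delayed (sg : nat -> nat -> F) (tau j : nat) : F :=
  if (D <= tau)%N then sg (tau - D)%N j else 0%R.

(* Coordinate [j] of the codeword of diagonal [c], whose message symbols are
   [v (c + l - D) l = sg (c + l - D) (B + l)], [l < K]. *)
Definition diag_parity (sg : nat -> nat -> F) (c j : nat) : F :=
  (\sum_(l < K) delayed sg (c + l) (B + l) * newton_at al l j)%R.

(* Packet [t] has length [D + B]: [u t] in slots [[0, B)]; coordinate [j] of
   diagonal [t + D - j] in slot [B + j] for [j < K]; and for [r < B],
   coordinate [K + r] of diagonal [t + D - (K + r)] plus [u (t - D) r] in
   slot [D + r]. *)
Definition packet_entry (sg : nat -> nat -> F) (t j : nat) : F :=
  if (j < B)%N then sg t j
  else if (j < D)%N then diag_parity sg (t + D - (j - B)) (j - B)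
  else (delayed sg t (j - D) +
        diag_parity sg (t + D - (K + (j - D))) (K + (j - D)))%R.

Lemma delayedB (s1 s2 : nat -> nat -> F) tau j :
  delayed (fun t j => s1 t j - s2 t j)%R tau j =
  (delayed s1 tau j - delayed s2 tau j)%R.
Proof. by rewrite /delayed; case: ifP; rewrite ?subr0. Qed.

Lemma diag_parityB (s1 s2 : nat -> nat -> F) c j :
  diag_parity (fun t j => s1 t j - s2 t j)%R c j =
  (diag_parity s1 c j - diag_parity s2 c j)%R.
Proof.
by rewrite /diag_parity -sumrB; apply: eq_bigr => l _; rewrite delayedB mulrBl.
Qed.

Lemma packet_entryB (s1 s2 : nat -> nat -> F) t j :
  packet_entry (fun t j => s1 t j - s2 t j)%R t j =
  (packet_entry s1 t j - packet_entry s2 t j)%R.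
Proof.
rewrite /packet_entry; case: ifP => // _; case: ifP => _; first exact: diag_parityB.
rewrite delayedB diag_parityB; ring.
Qed.

Lemma diag_parity_causal (s1 s2 : nat -> nat -> F) t c j :
  (forall tau j, (tau <= t)%N -> s1 tau j = s2 tau j) ->
  (c + j <= t + D)%N -> diag_parity s1 c j = diag_parity s2 c j.
Proof.
move=> s12 cj; apply: eq_bigr => l _.
have [lj|jl] := leqP l j; last by rewrite newton_at_lt // !mulr0.
by rewrite /delayed; case: ifP => // tD; rewrite s12 //; lia.
Qed.

Lemma packet_entry_causal (s1 s2 : nat -> nat -> F) t j :
  (forall tau j, (tau <= t)%N -> s1 tau j = s2 tau j) -> (j < D + B)%N ->
  packet_entry s1 t j = packet_entry s2 t j.
Proof.
move=> s12 jn; rewrite /packet_entry; case: ifP => jB; first by rewrite s12.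
case: ifP => jD; first by apply: diag_parity_causal s12 _; lia.
congr (_ + _)%R; last by apply: diag_parity_causal s12 _; lia.
by rewrite /delayed; case: ifP => // tD; rewrite s12 //; lia.
Qed.

Section Recovery.
Variables (dl : nat -> nat -> F) (i : nat).
Hypothesis dl_past : forall tau j, (tau < i)%N -> dl tau j = 0%R.

Lemma diag_parity_eq0_before c j :
  (c + j < i + D)%N -> diag_parity dl c j = 0%R.
Proof.
move=> cj; apply: big1 => l _.
have [lj|jl] := leqP l j; last by rewrite newton_at_lt // mulr0.
by rewrite /delayed; case: ifP => cD; rewrite ?dl_past ?mul0r //; lia.
Qed.

(* Coordinate [j] of diagonal [c] is read off packet [c + j - D], the
   [u]-symbol added to it being that of time [c + j - 2D < i]. *)
Lemma diag_parity_eq0_of_packet c j :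
  (j < D)%N -> (D <= c + j < i + D + D)%N ->
  (forall j', (j' < D + B)%N -> packet_entry dl (c + j - D) j' = 0%R) ->
  diag_parity dl c j = 0%R.
Proof.
move=> jD cj packet0; have := packet0 (B + j) ltac:(lia); rewrite /packet_entry.
case: ifP => [|_]; first lia.
have [jK|Kj] := ltnP j K.
  rewrite ifT; last lia.
  have -> : (c + j - D + D - (B + j - B) = c)%N by lia.
  by rewrite addKn.
rewrite ifF; last lia.
have -> : (c + j - D + D - (K + (B + j - D)) = c)%N by lia.
have -> : (K + (B + j - D) = j)%N by lia.
rewrite {1}/delayed; case: ifP => [cD|_]; last by rewrite add0r.
by rewrite dl_past ?add0r //; lia.
Qed.

Hypothesis al_inj :
  forall j j', (j < D)%N -> (j' < D)%N -> al j = al j' -> j = j'.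

Lemma v_symbol_eq0 l z :
  (l < K)%N -> (i <= z)%N ->
  (forall t, (i <= t < i + D)%N -> ~~ (z <= t < z + B)%N ->
     forall j', (j' < D + B)%N -> packet_entry dl t j' = 0%R) ->
  dl i (B + l) = 0%R.
Proof.
move=> lK iz packet0; pose c := (i + D - l)%N.
(* Coordinate [j] of diagonal [c] is sent at time [i + j - l]: those with
   [j < l] precede [i], and the burst covers at most [[x, x + B)] for
   [x = minn (z - i + l) K]. *)
have diag0 j : ((j < minn (z - i + l) K) ||
    (minn (z - i + l) K + B <= j <
       minn (z - i + l) K + B + (K - minn (z - i + l) K)))%N ->
    diag_parity dl c j = 0%R.
  move=> jgap; have [jl|lj] := ltnP j l.
    by apply: diag_parity_eq0_before; rewrite /c; lia.
  apply: diag_parity_eq0_of_packet; rewrite /c; try lia.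
  by move=> j' j'n; apply: packet0 => //; lia.
have := newton_code_gap al_inj (K := K) (a := fun l => delayed dl (c + l) (B + l))
  (x := minn (z - i + l) K) (y := minn (z - i + l) K + B)
  ltac:(lia) ltac:(lia) ltac:(lia) diag0 lK.
rewrite /delayed ifT; last lia.
by have -> : (c + l - D = i)%N by rewrite /c; lia.
Qed.

Lemma u_symbol_eq0 r m :
  (r < B)%N -> (m <= B)%N ->
  (forall t, (i + m <= t <= i + D)%N ->
     forall j', (j' < D + B)%N -> packet_entry dl t j' = 0%R) ->
  dl i r = 0%R.
Proof.
move=> rB mB packet0; pose c := (i + D + D - (K + r))%N.
(* Coordinates [[r, r + K)] of diagonal [c] are sent in [[i + B, i + D)],
   after the burst; coordinate [K + r] masks [u i r] in packet [i + D]. *)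
have diag0 j : ((j < 0) || (r <= j < r + (K - 0)))%N -> diag_parity dl c j = 0%R.
  move=> jr; apply: diag_parity_eq0_of_packet; rewrite /c; try lia.
  by move=> j' j'n; apply: packet0 => //; lia.
have msg0 := newton_code_gap al_inj (K := K) (a := fun l => delayed dl (c + l) (B + l))
  (x := 0) (y := r) ltac:(lia) ltac:(lia) ltac:(lia) diag0.
have parity0 : diag_parity dl c (K + r) = 0%R.
  by apply: big1 => l _; rewrite msg0 ?mul0r.
have := packet0 (i + D)%N ltac:(lia) (D + r)%N ltac:(lia).
rewrite /packet_entry ifF; last lia.
rewrite ifF; last lia.
have -> : (D + r - D = r)%N by lia.
rewrite -/c parity0 addr0 /delayed ifT; last lia.
by have -> : (i + D - D = i)%N by lia.
Qed.

Lemma source_eq0_of_burst a l :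
  (l <= B)%N ->
  (forall t, (i <= t <= i + D)%N -> ~~ (a <= t < a + l)%N ->
     forall j', (j' < D + B)%N -> packet_entry dl t j' = 0%R) ->
  forall j, (j < D)%N -> dl i j = 0%R.
Proof.
move=> lB packet0 j jD; have [jB|Bj] := ltnP j B; last first.
  have -> : j = (B + (j - B))%N by lia.
  apply: (@v_symbol_eq0 _ (maxn a i)); try lia.
  by move=> t ti tz j' j'n; apply: packet0 => //; lia.
have [ia|ia] := boolP (a <= i < a + l)%N.
  apply: (@u_symbol_eq0 j (a + l - i)); try lia.
  by move=> t ti j' j'n; apply: packet0 => //; lia.
by have := packet0 i ltac:(lia) ia j ltac:(lia); rewrite /packet_entry jB.
Qed.

End Recovery.
End BurstCode.

Definition row_at (F : fieldType) (k : nat) (x : 'rV[F]_k) (j : nat) : F :=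
  if insub j is Some o then x ord0 o else 0%R.

Lemma row_at_ord (F : fieldType) k (x : 'rV[F]_k) (o : 'I_k) : row_at x o = x ord0 o.
Proof. by rewrite /row_at valK. Qed.

Lemma row_at_out (F : fieldType) k (x : 'rV[F]_k) j : (k <= j)%N -> row_at x j = 0%R.
Proof. by move=> kj; rewrite /row_at insubN // -leqNgt. Qed.

Section StreamingCode.
Variables (F : fieldType) (al : nat -> F) (B K : nat).
Local Notation D := (B + K).

Definition burst_enc (t : nat) (s : nat -> 'rV[F]_D) : 'rV[F]_(D + B) :=
  \row_(j < D + B) packet_entry al B K (fun t => row_at (s t)) t j.

Lemma burst_enc_causal : causal_encoder burst_enc.
Proof.
move=> t s s' s_eq; apply/rowP => j; rewrite !mxE.
by apply: packet_entry_causal (ltn_ord j) => tau j' taut; rewrite s_eq.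
Qed.

Variable W : nat.
Hypothesis al_inj :
  forall j j', (j < D)%N -> (j' < D)%N -> al j = al j' -> j = j'.
Hypothesis DW : (D < W)%N.

Lemma burst_enc_determines (e : erasure_pattern) (s s' : nat -> 'rV[F]_D) i :
  admissible_C1 B W e ->
  (forall t, (t <= i + D)%N -> e t = false -> burst_enc t s = burst_enc t s') ->
  s i = s' i.
Proof.
move=> adm enc_eq; pose dl t j := (row_at (s t) j - row_at (s' t) j)%R.
suff dl0 i0 : (i0 <= i)%N -> forall j, dl i0 j = 0%R.
  apply/rowP => o; apply/eqP; rewrite -subr_eq0 -!row_at_ord.
  exact/eqP/dl0.
elim/ltn_ind: i0 => i0 IH i0i j.
have [jD|Dj] := ltnP j D; last by rewrite /dl !row_at_out // subrr.
have [a [l [lB burst]]] := adm i0.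
apply: (source_eq0_of_burst (i := i0) (a := a) (l := l) _ al_inj) => //.
  by move=> tau j' taui; apply: IH => //; lia.
move=> t ti tnb j' j'n.
have et : e t = false by rewrite burst ?(negbTE tnb) //; lia.
have := congr1 (fun x : 'rV[F]_(D + B) => x ord0 (Ordinal j'n)) (enc_eq t ltac:(lia) et).
by rewrite !mxE /dl packet_entryB => ->; rewrite subrr.
Qed.

Variable T : nat.
Hypothesis DT : (D <= T)%N.

Definition consistent_source (i : nat) (y : nat -> option 'rV[F]_(D + B))
    (s : nat -> 'rV[F]_D) : Prop :=
  forall t, (t <= i + T)%N -> forall z, y t = Some z -> z = burst_enc t s.

(* Any source consistent with the packets received by time [i + T] has the
   right [i]-th symbol, by [burst_enc_determines]. *)
Definition burst_dec (i : nat) (y : nat -> option 'rV[F]_(D + B)) : 'rV[F]_D :=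
  epsilon (inhabits (fun=> 0%R)) (consistent_source i y) i.

Lemma burst_dec_delay : delay_decoder T burst_dec.
Proof.
move=> i y y' y_eq; rewrite /burst_dec.
suff -> : consistent_source i y = consistent_source i y' by [].
apply: functional_extensionality => s; apply: propositional_extensionality.
by split=> cs t ti z; [rewrite -y_eq | rewrite y_eq]; auto.
Qed.

Lemma burst_code : streaming_code_exists_C1 F D (D + B) B W T.
Proof.
exists burst_enc, burst_dec; split; first exact: burst_enc_causal.
split; first exact: burst_dec_delay.
move=> s e adm i; set y := channel_output _ s e.
have s_cons : consistent_source i y s.
  by move=> t ti z; rewrite /y /channel_output; case: (e t) => // -[].
have := epsilon_spec (inhabits (fun=> 0%R)) _ (ex_intro _ s s_cons).
rewrite /burst_dec; set s' := epsilon _ _ => s'_cons.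
symmetry; apply: (burst_enc_determines adm) => t ti et.
by apply: s'_cons; [lia | rewrite /y /channel_output et].
Qed.

End StreamingCode.

Theorem proposition1 (B W T : nat) :
  0 < B -> 0 < W -> 0 < T -> B + 1 <= W ->
  exists (F : finFieldType) (k n : nat),
    0 < n /\ (k%:R / n%:R = rate_C1 B W T :> rat)%R /\
    streaming_code_exists_C1 F k n B W T.
Proof.
move=> B0 W0 T0 BW; rewrite /rate_C1 /Teff.
case: (leqP B (minn (W - 1) T)) => BTeff; last first.
  exists 'F_2, 0, 1; split=> //; split; first by rewrite mul0r.
  exists (fun _ _ => 0%R), (fun _ _ => 0%R); do 2![split=> //].
  by move=> s e _ i; rewrite [s i]thinmx0.
have [p Teff_p p_prime] := prime_above (minn (W - 1) T).
pose K := (minn (W - 1) T - B)%N.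
have TeffE : minn (W - 1) T = (B + K)%N by rewrite subnKC.
exists 'F_p, (B + K)%N, (B + K + B)%N; split; first lia.
split; first by rewrite TeffE.
apply: (@burst_code _ (fun j => j%:R)%R); try lia.
move=> j j' jD j'D /(congr1 val); rewrite /= !(val_Fp_nat p_prime) !modn_small //; lia.
Qed.
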